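(* Let $r,m,n$ be nonnegative integers. There is a bijection between (A) the set of pairs of partitions $(\alpha,\beta)$ with $\alpha$ nonempty, $|\alpha|+|\beta|=n$, every part of $\beta$ at most $\alpha_1$, $l(\alpha)-l(\beta)=m$, and exactly $r$ balanced parts (i.e. $b(\alpha,\beta)=r$), and (B) the set of strict shifted pairs of partitions $(\bar\alpha,\bar\beta)$ with $|\bar\alpha|+|\bar\beta|=n$ and $l(\bar\alpha)-l(\bar\beta)=m+2r$. The bijection sends $(\alpha,\beta)$ to the pair where $\bar\alpha$ is the partition formed by all parts of $\alpha$ together with all balanced parts of $\beta$, and $\bar\beta$ is formed by the unbalanced parts of $\beta$.
   Context: A partition is a finite nonincreasing sequence $\lambda=(\lambda_1,\dots,\lambda_r)$ of positive integers (possibly empty); $l(\lambda)=r$, $|\lambda|=\sum\lambda_i$, $\lambda_1$ the largest part. A pair of partitions $(\alpha,\beta)$ is strict shifted if $l(\alpha)>l(\beta)$ and $\alpha_{i+1}>\beta_i$ for $1\le i\le l(\beta)$. Balanced parts: let $(\gamma,\delta)$ be a pair of partitions, with the convention $\gamma_j=0$ for $j>l(\gamma)$. The parts $\delta_1,\dots,\delta_{l(\delta)}$ are classified recursively in increasing order of index: $\delta_i$ is balanced if and only if $\gamma_{i+1}\le\delta_i$ and the number of indices $j$ with $2\le j\le l(\gamma)$ and $\gamma_j>\delta_i$ equals the number of indices $j<i$ for which $\delta_j$ is unbalanced; otherwise $\delta_i$ is unbalanced. $b(\gamma,\delta)$ denotes the number of balanced parts of $\delta$. *)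

From mathcomp Require Import all_boot.
Set Implicit Arguments. Unset Strict Implicit. Unset Printing Implicit Defensive.

Definition is_partition (s : seq nat) : bool :=
  sorted geq s && all (fun x => 0 < x) s.

(* 1-indexed part lambda_j with convention lambda_j = 0 for j > l(lambda). *)
Definition part (s : seq nat) (j : nat) : nat := nth 0 s j.-1.

(* Balanced flags of (gamma, delta): the k-th entry (0-indexed, i.e. the
   part delta_{k+1}) is true iff that part is balanced.  [i] is the
   1-indexed position of the current part, [u] the number of unbalanced
   parts among delta_1 .. delta_{i-1}. *)
Fixpoint bflags_aux (g : seq nat) (i u : nat) (d : seq nat) : seq bool :=
  match d with
  | [::] => [::]
  | x :: d' =>
      let b := (part g i.+1 <= x) &&
               (count (fun y => x < y) (behead g) == u) in
      b :: bflags_aux g i.+1 (u + ~~ b) d'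
  end.

Definition bflags (g d : seq nat) : seq bool := bflags_aux g 1 0 d.

Definition balanced_parts (g d : seq nat) : seq nat := mask (bflags g d) d.
Definition unbalanced_parts (g d : seq nat) : seq nat :=
  mask (map negb (bflags g d)) d.

Definition nbalanced (g d : seq nat) : nat := count id (bflags g d).

Definition strict_shifted (a b : seq nat) : bool :=
  (size b < size a) &&
  all (fun i => part b i < part a i.+1) (iota 1 (size b)).

Definition setA (r m n : nat) (p : seq nat * seq nat) : bool :=
  let: (a, b) := p in
  [&& is_partition a, is_partition b, 0 < size a,
      sumn a + sumn b == n,
      all (fun x => x <= part a 1) b,
      size a == size b + m
    & nbalanced a b == r].

Definition setB (r m n : nat) (p : seq nat * seq nat) : bool :=
  let: (a, b) := p in
  [&& is_partition a, is_partition b, strict_shifted a b,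
      sumn a + sumn b == n
    & size a == size b + (m + 2 * r)].

Definition phi (p : seq nat * seq nat) : seq nat * seq nat :=
  let: (a, b) := p in
  (sort geq (a ++ balanced_parts a b), unbalanced_parts a b).

From mathcomp Require Import all_boot zify.
Set Implicit Arguments. Unset Strict Implicit. Unset Printing Implicit Defensive.

(* Write alpha = a0 :: c.  For partitions, the recursive classification of
   the parts of beta is greedy: scanning beta in order, with k unbalanced parts
   seen so far, a part x is balanced iff c_k <= x ([bflags_flags]).  The
   theorem is proved by induction on r.
   - r = 0: every part of beta is unbalanced, which is exactly the strict
     shifted condition beta_i < alpha_(i+1); so (A) = (B) and phi is the
     identity.
   - r + 1: [absorb] moves the last balanced part x of beta into alpha, at
     position k + 2 where k counts the unbalanced parts before x.  The parts
     before x keep their flags and those after x stay unbalanced, so the image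
     lies in (A) for r and m + 2, with the same phi.  [release] moves back into
     beta the part of alpha that fits as a new last balanced part; it inverts
     [absorb] and maps (A) for r, m + 2 into (A) for r + 1, m, preserving phi.
     As (B) only depends on m + 2r, the case r + 1, m follows from r, m + 2.
   The file develops, in order: nonincreasing sequences, insertion and
   deletion, greedy flags, the last balanced part, the two moves, and the
   induction. *)

Lemma geq_trans : transitive geq.
Proof. by move=> y x z /= Hyx Hzy; apply: leq_trans Hzy Hyx. Qed.

Lemma geq_total : total geq.
Proof. by move=> x y; rewrite /= orbC leq_total. Qed.

Lemma geq_anti : antisymmetric geq.
Proof. by move=> x y /= H; apply: anti_leq; rewrite andbC. Qed.

Lemma nth_geq s i j : sorted geq s -> i <= j -> nth 0 s j <= nth 0 s i.
Proof.
move=> Hs Hij; case: (ltnP j (size s)) => Hj; last by rewrite nth_default.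
exact: (sorted_leq_nth geq_trans (fun x => leqnn x) 0 Hs) (leq_ltn_trans Hij Hj) Hj Hij.
Qed.

Lemma mem_geq_head y s z : sorted geq (y :: s) -> z \in s -> z <= y.
Proof. by move=> /= /(order_path_min geq_trans) /allP H /H. Qed.

Lemma mem_take_geq b t z : sorted geq b -> z \in take t b -> nth 0 b t <= z.
Proof.
move=> Hb /(nthP 0) [i Hi <-]; rewrite size_take_min in Hi.
by rewrite nth_take; [apply: nth_geq Hb _; lia | lia].
Qed.

(* For nonincreasing [s], at most [u] entries exceed [x] iff the entry of
   index [u] (0 if absent) is at most [x]: the counting condition in the
   definition of balanced parts is an entrywise comparison. *)
Lemma count_gt_sorted s x u : sorted geq s ->
  (count (fun y => x < y) s <= u) = (nth 0 s u <= x).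
Proof.
elim: s u => [|y s IH] u Hs /=; first by rewrite nth_nil.
have small_y : y <= x -> count (fun y0 => x < y0) s = 0.
  move=> Hyx; apply/eqP; rewrite -leqn0 leqNgt -has_count; apply/hasP => -[z Hz].
  by rewrite ltnNge (leq_trans (mem_geq_head Hs Hz) Hyx).
case: u => [|u] /=; case: (ltnP x y) => Hxy //=.
- by rewrite small_y.
- by rewrite add1n ltnS IH // (path_sorted Hs).
- rewrite small_y // leq0n; symmetry.
  case: (ltnP u (size s)) => Hu; last by rewrite nth_default.
  exact: leq_trans (mem_geq_head Hs (mem_nth 0 Hu)) Hxy.
Qed.

Definition ins_at (k x : nat) (s : seq nat) : seq nat := take k s ++ x :: drop k s.
Definition rem_at (k : nat) (s : seq nat) : seq nat := take k s ++ drop k.+1 s.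

Lemma nth_ins_at s k x i : k <= size s ->
  nth 0 (ins_at k x s) i =
  if i < k then nth 0 s i else if i == k then x else nth 0 s i.-1.
Proof.
move=> Hk; rewrite nth_cat size_takel //.
case: (ltnP i k) => Hik; first by rewrite nth_take.
case: (eqVneq i k) => [->|Hne]; first by rewrite subnn.
have -> : i - k = (i - k).-1.+1 by lia.
by rewrite /= nth_drop; congr nth; lia.
Qed.

Lemma nth_rem_at s k i :
  nth 0 (rem_at k s) i = if i < k then nth 0 s i else nth 0 s i.+1.
Proof.
case: (leqP k (size s)) => Hk.
- rewrite nth_cat size_takel //.
  case: (ltnP i k) => Hik; first by rewrite nth_take.
  by rewrite nth_drop; congr nth; lia.
- rewrite /rem_at take_oversize ?(ltnW Hk) // drop_oversize ?(leqW (ltnW Hk)) // cats0.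
  by case: (ltnP i k) => Hik //; rewrite !nth_default //; lia.
Qed.

Lemma perm_ins_at s k x : perm_eq (ins_at k x s) (x :: s).
Proof.
by have /= -> := perm_catCA (take k s) [:: x] (drop k s) (x :: s); rewrite cat_take_drop.
Qed.

Lemma perm_rem_at s k : k < size s -> perm_eq (nth 0 s k :: rem_at k s) s.
Proof.
move=> Hk; have /= := perm_catCA (take k s) [:: nth 0 s k] (drop k.+1 s) s.
by rewrite -(drop_nth 0 Hk) cat_take_drop perm_refl perm_sym.
Qed.

Lemma size_rem_at s k : k < size s -> size (rem_at k s) = (size s).-1.
Proof. by move/perm_rem_at/perm_size => /= <-. Qed.

Lemma rem_ins_at s k x : k <= size s -> rem_at k (ins_at k x s) = s.
Proof.
move=> Hk; rewrite /rem_at /ins_at take_size_cat ?size_takel //.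
by rewrite -cat_rcons drop_size_cat ?size_rcons ?size_takel // cat_take_drop.
Qed.

Lemma ins_rem_at s k : k < size s -> ins_at k (nth 0 s k) (rem_at k s) = s.
Proof.
move=> Hk; rewrite /rem_at /ins_at take_size_cat ?size_takel 1?ltnW //.
by rewrite drop_size_cat ?size_takel 1?ltnW // -drop_nth // cat_take_drop.
Qed.

Lemma sorted_ins_at s k x : sorted geq s -> (0 < k -> x <= nth 0 s k.-1) ->
  nth 0 s k <= x -> sorted geq (ins_at k x s).
Proof.
elim: s k => [|y s IH] [|k] Hs Hlo Hhi //=; first by apply/andP.
rewrite (path_sortedE geq_trans); apply/andP; split.
- rewrite (perm_all _ (perm_ins_at s k x)) /=; apply/andP; split.
  + exact: leq_trans (Hlo isT) (nth_geq Hs (leq0n k)).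
  + by move: Hs; rewrite /= (path_sortedE geq_trans) => /andP [].
- apply: IH => //; first exact: path_sorted Hs.
  by case: k Hlo {Hhi} => // k Hlo _; exact: Hlo.
Qed.

Lemma sorted_rem_at s k : sorted geq s -> sorted geq (rem_at k s).
Proof.
move=> Hs; apply: (subseq_sorted geq_trans _ Hs).
by rewrite /rem_at -{3}(cat_take_drop k s) subseq_cat2l -add1n -drop_drop drop_subseq.
Qed.

(* Greedy balance flags.  [flags c k d] classifies the parts of [d] when
   [c] lists alpha_2, alpha_3, ... and [k] parts have already been found
   unbalanced: the next part [x] is balanced iff [c_k <= x]. *)
Fixpoint flags (c : seq nat) (k : nat) (d : seq nat) : seq bool :=
  if d is x :: d' then
    let bal := nth 0 c k <= x in bal :: flags c (k + ~~ bal) d'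
  else [::].

Lemma size_flags c k d : size (flags c k d) = size d.
Proof. by elim: d k => [|x d IH] k //=; rewrite IH. Qed.

(* For partitions the recursive definition of balanced parts coincides with
   the greedy one; the invariant is that at least [u] parts of [behead g]
   exceed each remaining part of [d]. *)
Lemma bflags_aux_flags g i u d : 0 < i ->
  sorted geq (behead g) -> sorted geq d -> u <= i.-1 ->
  (forall x, x \in d -> u <= count (fun y => x < y) (behead g)) ->
  bflags_aux g i u d = flags (behead g) u d.
Proof.
elim: d i u => [|x d IH] i u Hi Hg Hd Hui Hcount //=.
have Hx := Hcount x (mem_head _ _).
have count_test : (count (fun y => x < y) (behead g) == u) = (nth 0 (behead g) u <= x).
  by rewrite eqn_leq Hx andbT count_gt_sorted.
have part_test : (part g i.+1 <= x) && (count (fun y => x < y) (behead g) == u)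
                 = (nth 0 (behead g) u <= x).
  rewrite count_test andbC; case Hn: (nth 0 (behead g) u <= x) => //=.
  apply: leq_trans Hn; rewrite /part /= -(prednK Hi) -nth_behead.
  exact: nth_geq Hg Hui.
rewrite part_test; congr (_ :: _); apply: IH => //; first exact: path_sorted Hd.
  by case: (nth 0 (behead g) u <= x) => /=; lia.
move=> z Hz; have Hzx := mem_geq_head Hd Hz.
have count_mono : count (fun y => x < y) (behead g) <= count (fun y => z < y) (behead g).
  by apply: sub_count => y /= Hy; apply: leq_ltn_trans Hzx Hy.
case Hn: (nth 0 (behead g) u <= x) => /=.
- by rewrite addn0 (leq_trans Hx count_mono).
- rewrite addn1; apply: leq_trans count_mono.
  by rewrite ltn_neqAle Hx andbT eq_sym count_test Hn.
Qed.

Lemma bflags_flags a b : sorted geq a -> sorted geq b -> bflags a b = flags (behead a) 0 b.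
Proof.
move=> Ha Hb; apply: bflags_aux_flags => //.
by case: a Ha => //= x a /path_sorted.
Qed.

Lemma flags_cat c k d1 d2 :
  flags c k (d1 ++ d2) = flags c k d1 ++ flags c (k + count negb (flags c k d1)) d2.
Proof. by elim: d1 k => [|x d1 IH] k /=; rewrite ?addn0 // IH addnA. Qed.

Lemma take_flags c k d n : take n (flags c k d) = flags c k (take n d).
Proof. by elim: d n k => [|x d IH] [|n] k //=; rewrite IH. Qed.

Lemma nth_flags c k d j : j < size d ->
  nth false (flags c k d) j = (nth 0 c (k + count negb (flags c k (take j d))) <= nth 0 d j).
Proof.
move=> Hj; rewrite -{1}(cat_take_drop j d) flags_cat (drop_nth 0 Hj) nth_cat size_flags.
by rewrite size_takel ?(ltnW Hj) // ltnn subnn.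
Qed.

Lemma eq_flags c c' K k d :
  (forall j, j < K -> nth 0 c j = nth 0 c' j) ->
  (forall y, y \in d -> (nth 0 c K <= y) = (nth 0 c' K <= y)) ->
  k + count negb (flags c k d) <= K -> flags c k d = flags c' k d.
Proof.
move=> Hlow; elim: d k => [|x d IH] k //= Hd Hk.
have Hx : (nth 0 c k <= x) = (nth 0 c' k <= x).
  case: (ltngtP k K) (leq_trans (leq_addr _ _) Hk) => // [/Hlow -> //|-> _].
  exact: Hd (mem_head _ _).
rewrite -Hx IH //; last by move: Hk; rewrite addnA.
by move=> y Hy; apply: Hd; rewrite inE Hy orbT.
Qed.

(* [below c k d]: every part of [d] is unbalanced, i.e. [d_j < c_(k+j)]. *)
Definition below (c : seq nat) (k : nat) (d : seq nat) : Prop :=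
  forall j, j < size d -> nth 0 d j < nth 0 c (k + j).

Lemma flags_falseP c k d : flags c k d = nseq (size d) false <-> below c k d.
Proof.
elim: d k => [|x d IH] k /=; first by split=> // _ j.
split=> [[Hx /IH Hd] [|j] /= Hj|Hb].
- by rewrite addn0 ltnNge; apply/negP => H; rewrite H in Hx.
- by move: Hx (Hd j Hj) => ->; rewrite addn1 addSnnS.
- have := Hb 0 isT; rewrite addn0 ltnNge => /negbTE ->; congr (_ :: _).
  by apply/IH => j Hj; have := Hb j.+1 Hj; rewrite /= addn1 addSnnS.
Qed.

Lemma last_unbalanced_gt c k d x : (forall z, z \in d -> x <= z) ->
  0 < count negb (flags c k d) -> x < nth 0 c (k + count negb (flags c k d)).-1.
Proof.
elim: d k => [|y d IH] k //= Hx.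
have Hy := Hx y (mem_head _ _).
have Hd : forall z, z \in d -> x <= z by move=> z Hz; apply: Hx; rewrite inE Hz orbT.
case Hb: (nth 0 c k <= y) => /=; first by rewrite !addn0 add0n; exact: IH.
rewrite add1n addn1 => _; case: (posnP (count negb (flags c k.+1 d))) => [->|Hp].
- by rewrite addn1 /=; apply: leq_ltn_trans Hy _; rewrite ltnNge Hb.
- by rewrite -addSnnS; apply: IH.
Qed.

Fixpoint last_index (f : nat -> bool) (n : nat) : nat :=
  if n is n'.+1 then (if f n' then n else last_index f n') else 0.

Lemma last_index_le f n : last_index f n <= n.
Proof. by elim: n => //= n IH; case: (f n) => //; exact: leqW. Qed.

Lemma last_index_true f n : 0 < last_index f n -> f (last_index f n).-1.
Proof. by elim: n => //= n IH; case Hf: (f n). Qed.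

Lemma last_index_false f n j : last_index f n <= j -> j < n -> ~~ f j.
Proof.
elim: n => //= n IH; case Hf: (f n) => H1 H2; first lia.
by move: H2; rewrite ltnS leq_eqVlt => /orP [/eqP Hj|]; [rewrite Hj Hf | exact: IH].
Qed.

Lemma last_index_uniq (f : nat -> bool) n p : p <= n -> (0 < p -> f p.-1) ->
  (forall j, p <= j -> j < n -> ~~ f j) -> last_index f n = p.
Proof.
elim: n => [|n IH] Hp Htrue Hfalse /=; first by move: Hp; rewrite leqn0 => /eqP.
case: (ltngtP p n.+1) Hp => // [Hlt|Hpn] _; last by subst p; rewrite (Htrue isT).
rewrite (negbTE (Hfalse n _ _)) //; apply: IH => // j Hj1 Hj2.
by apply: Hfalse; lia.
Qed.

Definition last_true (l : seq bool) : nat := last_index (nth false l) (size l).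

Lemma last_true_cat_false l n : last_true (l ++ nseq n false) = last_true l.
Proof.
rewrite /last_true; have Hle := last_index_le (nth false l) (size l).
apply: last_index_uniq; first by rewrite size_cat (leq_trans Hle) ?leq_addr.
- move=> Hpos; rewrite nth_cat ifT; first exact: last_index_true.
  by move: Hle Hpos; lia.
- move=> j Hj1 Hj2; rewrite nth_cat nth_nseq if_same.
  by case: (ltnP j (size l)) => // Hj; exact: (last_index_false Hj1 Hj).
Qed.

Lemma drop_last_true l : drop (last_true l) l = nseq (size l - last_true l) false.
Proof.
rewrite -size_drop; apply/all_pred1P/allP => x /(nthP false) [j Hj <-].
have {}Hj : j < size l - last_true l by rewrite -size_drop.
rewrite nth_drop /=; apply/eqP/negbTE/(@last_index_false (nth false l) (size l)).
all: by rewrite -/(last_true l); lia.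
Qed.

(* The last balanced part of [b], at position [s - 1] (with [s = 0] if there
   is none): the prefix [take s b] ends with it and has [k] unbalanced parts,
   and everything after it is unbalanced. *)
Section LastBalanced.
Variables c b : seq nat.
Let s := last_true (flags c 0 b).
Let k := count negb (flags c 0 (take s b)).

Lemma last_balanced_le : s <= size b.
Proof. by rewrite -(size_flags c 0 b); exact: last_index_le. Qed.

Lemma flags_after_last_balanced : flags c k (drop s b) = nseq (size b - s) false.
Proof.
have := drop_last_true (flags c 0 b); rewrite -/s size_flags.
rewrite -{1}(cat_take_drop s b) flags_cat drop_size_cat //.
by rewrite size_flags size_takel // last_balanced_le.
Qed.

Lemma flags_split_last_balanced :
  flags c 0 b = flags c 0 (take s b) ++ nseq (size b - s) false.
Proof. by rewrite -{1}(cat_take_drop s b) flags_cat flags_after_last_balanced. Qed.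

Lemma below_after_last_balanced : below c k (drop s b).
Proof. by apply/flags_falseP; rewrite flags_after_last_balanced size_drop. Qed.

Lemma last_balanced_spec : 0 < s ->
  count negb (flags c 0 (take s.-1 b)) = k /\ nth 0 c k <= nth 0 b s.-1.
Proof.
move=> Hs; have Hlt : s.-1 < size b by rewrite prednK // last_balanced_le.
have Hbal : nth false (flags c 0 b) s.-1 := last_index_true Hs.
rewrite nth_flags // add0n in Hbal.
suff Hk : count negb (flags c 0 (take s.-1 b)) = k by rewrite -Hk.
rewrite /k; have -> : take s b = rcons (take s.-1 b) (nth 0 b s.-1).
  by rewrite -take_nth // prednK.
by rewrite -cats1 flags_cat count_cat /= add0n Hbal /= !addn0.
Qed.

End LastBalanced.

Lemma phi_move_balanced a0 c c' d1 x u F :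
  size F = size d1 -> perm_eq c' (x :: c) ->
  bflags (a0 :: c) (d1 ++ x :: u) = F ++ true :: nseq (size u) false ->
  bflags (a0 :: c') (d1 ++ u) = F ++ nseq (size u) false ->
  phi (a0 :: c', d1 ++ u) = phi (a0 :: c, d1 ++ x :: u).
Proof.
move=> HF Hc E E'; rewrite /phi /balanced_parts /unbalanced_parts E E'.
rewrite !map_cat !mask_cat ?size_map //= !mask_false; congr pair.
apply/(perm_sortP geq_total geq_trans geq_anti).
rewrite /= perm_cons cats0 (perm_trans (_ : perm_eq _ (x :: c ++ mask F d1))) //.
- by rewrite -cat_cons perm_cat2r.
- by rewrite catA cats1 perm_sym perm_rcons.
Qed.

(* [absorb] moves the last balanced part of beta, at position [t], into
   alpha at position [k + 2], where [k] counts the unbalanced parts before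
   it; [release] is the inverse move, taking from alpha the part that becomes
   the new last balanced part of beta. *)
Definition absorb (p : seq nat * seq nat) : seq nat * seq nat :=
  let: (a, b) := p in
  let c := behead a in
  let t := (last_true (flags c 0 b)).-1 in
  let k := count negb (flags c 0 (take t b)) in
  (head 0 a :: ins_at k (nth 0 b t) c, rem_at t b).

Definition release (p : seq nat * seq nat) : seq nat * seq nat :=
  let: (a, b) := p in
  let c := behead a in
  let s := last_true (flags c 0 b) in
  let k := count negb (flags c 0 (take s b)) in
  let u := drop s b in
  let q := last_index (fun j => nth 0 c (k + j.+1) <= nth 0 u j) (size u) in
  (head 0 a :: rem_at (k + q) c, ins_at (s + q) (nth 0 c (k + q)) b).

Section Absorb.
Variables (a0 : nat) (c b : seq nat).
Hypotheses (Hc : sorted geq (a0 :: c)) (Hb : sorted geq b)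
  (Hba : all (fun x => x <= a0) b) (Hbal : 0 < count id (flags c 0 b)).

Local Notation s := (last_true (flags c 0 b)).
Local Notation t := s.-1.
Local Notation k := (count negb (flags c 0 (take t b))).
Local Notation x := (nth 0 b t).
Local Notation c' := (ins_at k x c).
Local Notation b' := (rem_at t b).

Lemma absorb_s_pos : 0 < s.
Proof.
rewrite lt0n; apply/negP => /eqP Hs; move: Hbal.
by rewrite flags_split_last_balanced Hs take0 /= count_nseq.
Qed.

Lemma absorb_t_lt : t < size b.
Proof. by rewrite prednK ?absorb_s_pos ?last_balanced_le. Qed.

Lemma absorb_b : b = take t b ++ x :: drop s b.
Proof.
have -> : drop s b = drop t.+1 b by rewrite prednK // absorb_s_pos.
by rewrite -drop_nth ?absorb_t_lt // cat_take_drop.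
Qed.

Lemma absorb_b' : b' = take t b ++ drop s b.
Proof. by rewrite /rem_at prednK // absorb_s_pos. Qed.

Lemma absorb_k_eq : count negb (flags c 0 (take s b)) = k.
Proof. by case: (last_balanced_spec absorb_s_pos). Qed.

(* [x] is balanced, so [c_k <= x] ... *)
Lemma absorb_x_ge : nth 0 c k <= x.
Proof. by case: (last_balanced_spec absorb_s_pos) => <-. Qed.

Lemma absorb_below : below c k (drop s b).
Proof. by rewrite -absorb_k_eq; exact: below_after_last_balanced. Qed.

(* ... and [x < c_(k-1)]: inserting [x] at position [k] keeps alpha sorted. *)
Lemma absorb_x_lt : 0 < k -> x < nth 0 c k.-1.
Proof. by move=> Hk; have := last_unbalanced_gt (fun z => mem_take_geq Hb) Hk. Qed.

Lemma absorb_k_le : k <= size c.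
Proof.
case: (posnP k) => [-> //|Hk]; rewrite -(prednK Hk) ltnNge.
by apply/negP => /(nth_default 0) Hnil; have := absorb_x_lt Hk; rewrite Hnil.
Qed.

Lemma absorb_x_le : x <= a0.
Proof. exact: allP Hba _ (mem_nth 0 absorb_t_lt). Qed.

Lemma absorb_sorted_a' : sorted geq (a0 :: c').
Proof.
rewrite /= (path_sortedE geq_trans); apply/andP; split.
- rewrite (perm_all _ (perm_ins_at c k x)) /= absorb_x_le /=.
  by move: Hc; rewrite /= (path_sortedE geq_trans) => /andP [].
- by apply: sorted_ins_at (path_sorted Hc) _ absorb_x_ge => /absorb_x_lt /ltnW.
Qed.

Lemma absorb_prefix_flags : flags c' 0 (take t b) = flags c 0 (take t b).
Proof.
symmetry; apply: (@eq_flags c c' k) => // [j Hj|y Hy].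
- by rewrite nth_ins_at ?absorb_k_le // Hj.
- rewrite nth_ins_at ?absorb_k_le // ltnn eqxx.
  have Hxy := mem_take_geq Hb Hy.
  by rewrite Hxy (leq_trans absorb_x_ge Hxy).
Qed.

Lemma absorb_flags :
  flags c 0 b = flags c 0 (take t b) ++ true :: nseq (size b - s) false.
Proof.
rewrite {1}absorb_b flags_cat /= add0n absorb_x_ge addn0 -absorb_k_eq.
by rewrite flags_after_last_balanced.
Qed.

Lemma absorb_flags' : flags c' 0 b' = flags c 0 (take t b) ++ nseq (size b - s) false.
Proof.
rewrite absorb_b' flags_cat absorb_prefix_flags add0n; congr (_ ++ _).
rewrite -size_drop; apply/flags_falseP => j Hj.
apply: leq_trans (absorb_below Hj) _.
rewrite nth_ins_at ?absorb_k_le //; case: ltnP => // _; case: eqP => [->|_].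
- exact: absorb_x_ge.
- exact: nth_geq (path_sorted Hc) (leq_pred _).
Qed.

Lemma absorb_count : count id (flags c' 0 b') = (count id (flags c 0 b)).-1.
Proof. by rewrite absorb_flags' [in RHS]absorb_flags !count_cat /= !count_nseq /=; lia. Qed.

Lemma absorb_phi : phi (a0 :: c', b') = phi (a0 :: c, b).
Proof.
rewrite absorb_b' [in RHS]absorb_b.
apply: (phi_move_balanced (F := flags c 0 (take t b))).
- by rewrite size_flags.
- exact: perm_ins_at.
- by rewrite -absorb_b bflags_flags //= [in LHS]absorb_flags size_drop.
- rewrite -absorb_b' bflags_flags ?absorb_sorted_a' ?sorted_rem_at //=.
  by rewrite absorb_flags' size_drop.
Qed.

Local Notation s' := (last_true (flags c 0 (take t b))).
Local Notation k' := (count negb (flags c' 0 (take s' b'))).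

Lemma absorb_last_true' : last_true (flags c' 0 b') = s'.
Proof. by rewrite absorb_flags' last_true_cat_false. Qed.

Lemma absorb_s'_le : s' <= t.
Proof. by have := last_balanced_le c (take t b); rewrite size_takel // ltnW ?absorb_t_lt. Qed.

Lemma absorb_k'_split : k' + (t - s') = k.
Proof.
have Htake : take s' b' = take s' (take t b).
  by rewrite absorb_b' takel_cat // size_takel ?absorb_s'_le // ltnW ?absorb_t_lt.
have Hk' : k' = count negb (flags c 0 (take s' (take t b))).
  by rewrite Htake -(take_flags c' 0 (take t b)) absorb_prefix_flags take_flags.
have := congr1 (count negb) (flags_split_last_balanced c (take t b)).
by rewrite count_cat count_nseq size_takel ?(ltnW absorb_t_lt) //= mul1n Hk' => ->.
Qed.

Lemma absorb_q : last_index (fun j => nth 0 c' (k' + j.+1) <= nth 0 (drop s' b') j)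
                (size (drop s' b')) = t - s'.
Proof.
have Hs't := absorb_s'_le; have Ht := absorb_t_lt; have Hs := absorb_s_pos.
have Hk := absorb_k_le; have Hsplit := absorb_k'_split.
have Hsize : size (drop s' b') = (size b).-1 - s' by rewrite size_drop size_rem_at.
apply: last_index_uniq; first by rewrite Hsize; lia.
- move=> Hp; rewrite prednK // Hsplit nth_ins_at // ltnn eqxx nth_drop nth_rem_at.
  by rewrite ifT; [apply: nth_geq Hb _ |]; lia.
- move=> j Hj1; rewrite Hsize -ltnNge nth_drop nth_rem_at => Hj2.
  rewrite ifF; last lia.
  rewrite nth_ins_at // ifF; last lia.
  rewrite ifF; last lia.
  have -> : (s' + j).+1 = s + (j - (t - s')) by lia.
  have -> : (k' + j.+1).-1 = k + (j - (t - s')) by lia.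
  by rewrite -nth_drop; apply: absorb_below; rewrite size_drop; lia.
Qed.

Lemma release_absorb : release (a0 :: c', b') = (a0 :: c, b).
Proof.
rewrite /release /= absorb_last_true' absorb_q absorb_k'_split (subnKC absorb_s'_le).
by rewrite nth_ins_at ?absorb_k_le // ltnn eqxx rem_ins_at ?absorb_k_le // ins_rem_at ?absorb_t_lt.
Qed.

End Absorb.

(* The released part
   [x = c_(k+q)] is inserted into beta at position [s + q], where it becomes
   the last balanced part. *)
Section Release.
Variables (a0 : nat) (c b : seq nat).
Hypotheses (Hc : sorted geq (a0 :: c)) (Hb : sorted geq b) (Hsize : size b < size c).

Local Notation s := (last_true (flags c 0 b)).
Local Notation k := (count negb (flags c 0 (take s b))).
Local Notation u := (drop s b).
Local Notation q := (last_index (fun j => nth 0 c (k + j.+1) <= nth 0 u j) (size u)).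
Local Notation N := (k + q).
Local Notation x := (nth 0 c N).
Local Notation c' := (rem_at N c).
Local Notation b' := (ins_at (s + q) x b).

Lemma release_q_le : q <= size u.
Proof. exact: last_index_le. Qed.

Lemma release_sq_le : s + q <= size b.
Proof. by have := release_q_le; rewrite size_drop; have := last_balanced_le c b; lia. Qed.

Lemma release_N_lt : N < size c.
Proof.
have Hk : k <= s by rewrite (leq_trans (count_size _ _)) // size_flags size_take_min geq_minl.
by have := release_sq_le; lia.
Qed.

Lemma release_x_le : x <= a0.
Proof. exact: mem_geq_head Hc (mem_nth 0 release_N_lt). Qed.

Lemma release_prefix_ge y : y \in take s b -> nth 0 c k <= y.
Proof.
move=> Hy; case: (posnP s) Hy => [->|Hs Hy]; first by rewrite take0.
have [<- Hle] := last_balanced_spec Hs; apply: leq_trans Hle _.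
move: Hy => /(nthP 0) [i Hi <-]; rewrite size_take_min in Hi.
by rewrite nth_take; [apply: nth_geq Hb _; lia | lia].
Qed.

Lemma release_x_ge_next : nth 0 b (s + q) <= x.
Proof.
case: (ltnP q (size u)) => Hq.
- by rewrite -nth_drop; apply: ltnW; exact: below_after_last_balanced.
- by rewrite nth_default //; move: Hq; rewrite size_drop; have := last_balanced_le c b; lia.
Qed.

Lemma release_x_le_prev : 0 < s + q -> x <= nth 0 b (s + q).-1.
Proof.
case: (posnP q) => [->|Hq] Hsq.
- by rewrite !addn0 in Hsq *; case: (last_balanced_spec Hsq).
- have := last_index_true Hq; rewrite prednK // nth_drop.
  by have -> : s + q.-1 = (s + q).-1 by lia.
Qed.

Lemma release_sorted_b' : sorted geq b'.
Proof. exact: sorted_ins_at Hb release_x_le_prev release_x_ge_next. Qed.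

Lemma release_sorted_a' : sorted geq (a0 :: c').
Proof.
rewrite /= (path_sortedE geq_trans) sorted_rem_at ?(path_sorted Hc) // andbT.
have := perm_all (fun y => y <= a0) (perm_rem_at release_N_lt).
rewrite /= release_x_le /= => ->.
by move: Hc; rewrite /= (path_sortedE geq_trans) => /andP [].
Qed.

Lemma release_prefix_flags : flags c' 0 (take s b) = flags c 0 (take s b).
Proof.
symmetry; apply: (@eq_flags c c' k) => // [j Hj|y Hy].
- by rewrite nth_rem_at ifT //; lia.
- have Hy' := release_prefix_ge Hy; rewrite Hy'; symmetry; apply: leq_trans Hy'.
  rewrite nth_rem_at; case: ifP => // _; exact: nth_geq (path_sorted Hc) (leqnSn _).
Qed.

Lemma release_flags' : flags c' 0 b' =
  flags c 0 (take s b) ++ nseq q false ++ true :: nseq (size u - q) false.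
Proof.
have Hq := release_q_le.
have Hb' : b' = take s b ++ (take q u ++ x :: drop q u).
  by rewrite /ins_at takeD -catA drop_drop (addnC q s).
rewrite Hb' flags_cat release_prefix_flags add0n flags_cat.
have Hpre : flags c' k (take q u) = nseq (size (take q u)) false.
  apply/flags_falseP => j; rewrite size_takel // => Hj.
  by rewrite nth_take // nth_rem_at ifT; [apply: below_after_last_balanced |]; lia.
rewrite Hpre size_takel // count_nseq /= mul1n nth_rem_at ltnn.
rewrite (nth_geq (path_sorted Hc) (leqnSn N)) addn0.
congr (_ ++ (_ ++ true :: _)).
rewrite -(size_drop q u); apply/flags_falseP => j Hj; rewrite size_drop in Hj.
rewrite nth_drop nth_rem_at ifF; last lia.
have := @last_index_false (fun j => nth 0 c (k + j.+1) <= nth 0 u j) (size u) (q + j).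
by rewrite -ltnNge addnS addnA; apply; lia.
Qed.

Lemma release_count : count id (flags c' 0 b') = (count id (flags c 0 b)).+1.
Proof.
by rewrite release_flags' [in RHS]flags_split_last_balanced !count_cat /= !count_nseq /=; lia.
Qed.

Lemma release_phi : phi (a0 :: c', b') = phi (a0 :: c, b).
Proof.
have Hsq := release_sq_le.
have Hdrop : size (drop (s + q) b) = size u - q by rewrite !size_drop; lia.
symmetry; rewrite -[in LHS](cat_take_drop (s + q) b).
apply: (phi_move_balanced (F := flags c 0 (take s b) ++ nseq q false)).
- by rewrite size_cat size_flags size_nseq !size_takel //; lia.
- by rewrite perm_sym perm_rem_at // release_N_lt.
- rewrite -/(ins_at (s + q) x b) bflags_flags ?release_sorted_a' ?release_sorted_b' //=.
  by rewrite release_flags' Hdrop catA.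
- rewrite cat_take_drop bflags_flags //= [in LHS]flags_split_last_balanced Hdrop.
  by rewrite -catA -nseqD; congr (_ ++ nseq _ _); have := release_q_le; rewrite size_drop; lia.
Qed.

End Release.

Lemma setA_cons r m n a0 c b :
  setA r m n (a0 :: c, b) <->
  [/\ is_partition (a0 :: c), is_partition b & all (fun x => x <= a0) b] /\
  [/\ sumn (a0 :: c) + sumn b = n, size (a0 :: c) = size b + m
     & count id (flags c 0 b) = r].
Proof.
rewrite /setA /nbalanced.
split=> [/and5P [Ha Hb _ /eqP Hn /and3P [Hba /eqP Hsz /eqP Hr]]|[[Ha Hb Hba] [Hn Hsz Hr]]].
- by split; split=> //; rewrite bflags_flags ?(andP Ha).1 ?(andP Hb).1 in Hr.
- rewrite Hn -Hsz bflags_flags ?(andP Ha).1 ?(andP Hb).1 //= Hr.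
  by rewrite Ha Hb Hba !eqxx.
Qed.

Lemma absorb_setA r m n p : setA r.+1 m n p ->
  [/\ setA r (m + 2) n (absorb p), phi (absorb p) = phi p & release (absorb p) = p].
Proof.
case: p => [[|a0 c] b] HA; first by move: HA; rewrite /setA /= !andbF.
move/setA_cons: HA => [[/andP [Hc Hpc] /andP [Hb Hpb] Hba] [Hn Hsz Hr]].
have Hbal : 0 < count id (flags c 0 b) by rewrite Hr.
have Ht := absorb_t_lt Hbal.
set t := (last_true (flags c 0 b)).-1 in Ht *.
set k := count negb (flags c 0 (take t b)).
have Pc := perm_ins_at c k (nth 0 b t).
have Pb := perm_rem_at Ht.
split; rewrite /absorb /= -/t -/k.
- apply/setA_cons; split; split.
  + rewrite /is_partition absorb_sorted_a' //= (perm_all _ Pc) /=.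
    by rewrite (allP Hpb _ (mem_nth 0 Ht)); move: Hpc => /= /andP [-> ->].
  + rewrite /is_partition sorted_rem_at //=.
    by move: Hpb; rewrite -(perm_all _ Pb) => /andP [].
  + by move: Hba; rewrite -(perm_all _ Pb) => /andP [].
  + by rewrite -Hn /= (perm_sumn Pc) -(perm_sumn Pb) /=; lia.
  + by rewrite /= (perm_size Pc) -(perm_size Pb) /= in Hsz *; lia.
  + by rewrite (absorb_count Hc Hb Hba Hbal) Hr.
- exact: absorb_phi.
- exact: release_absorb.
Qed.

Lemma release_setA r m n p : setA r (m + 2) n p ->
  setA r.+1 m n (release p) /\ phi (release p) = phi p.
Proof.
case: p => [[|a0 c] b] HA; first by move: HA; rewrite /setA /= !andbF.
move/setA_cons: HA => [[/andP [Hc Hpc] /andP [Hb Hpb] Hba] [Hn Hsz Hr]].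
have Hlt : size b < size c by move: Hsz => /=; lia.
split; last exact: release_phi.
rewrite /release /=; set N := (X in rem_at X c); set j := (X in ins_at X _ b).
have HN : N < size c := release_N_lt Hc Hb Hlt.
have Pc := perm_rem_at HN; have Pb := perm_ins_at b j (nth 0 c N).
have Hx : 0 < nth 0 c N by move: Hpc => /= /andP [_ /allP]; apply; exact: mem_nth.
apply/setA_cons; split; split.
- rewrite /is_partition (release_sorted_a' Hc Hb Hlt) /=.
  by move: Hpc; rewrite /= -(perm_all _ Pc) /= => /and3P [-> _ ->].
- by rewrite /is_partition (release_sorted_b' Hc Hb Hlt) /= (perm_all _ Pb) /= Hpb Hx.
- by rewrite (perm_all _ Pb) /= Hba andbT (release_x_le Hc Hb Hlt).
- by rewrite -Hn /= -(perm_sumn Pc) (perm_sumn Pb) /=; lia.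
- by rewrite /= (perm_size Pb) -(perm_size Pc) /= in Hsz *; lia.
- by rewrite (release_count Hc Hb Hlt) Hr.
Qed.

Lemma count_true_eq0 (l : seq bool) : count id l = 0 -> l = nseq (size l) false.
Proof. by elim: l => //= [[]] l IH //= /IH {1}->. Qed.

Lemma strict_shiftedP a0 c b : strict_shifted (a0 :: c) b <-> below c 0 b.
Proof.
split=> [/andP [_ /allP Hsh] j Hj|Hbel].
  by rewrite add0n; have := Hsh j.+1; rewrite mem_iota /part /=; apply; lia.
apply/andP; split.
- rewrite /= ltnS leqNgt; apply/negP => Hcb.
  by have := Hbel _ Hcb; rewrite add0n (nth_default 0 (leqnn (size c))).
- apply/allP => -[|i]; rewrite mem_iota // /part /= => Hi.
  by apply: Hbel; lia.
Qed.

Lemma setA0_setB m n p : setA 0 m n p <-> setB 0 m n p.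
Proof.
case: p => [[|a0 c] b]; first by rewrite /setA /setB /= !andbF.
rewrite /setB muln0 addn0; split.
- move/setA_cons => [[Ha Hb _] [Hn Hsz /count_true_eq0]].
  rewrite size_flags => /flags_falseP Hbel.
  by rewrite Ha Hb Hn Hsz !eqxx (proj2 (strict_shiftedP _ _ _) Hbel).
- move=> /and5P [Ha Hb /strict_shiftedP Hbel /eqP Hn /eqP Hsz].
  apply/setA_cons; split; split=> //; last first.
    by have /flags_falseP -> := Hbel; rewrite count_nseq.
  apply/allP => y Hy; have Hb0 : 0 < size b by case: (b) Hy.
  have Hy0 : y <= nth 0 b 0.
    by move: Hy => /(nthP 0) [i Hi <-]; apply: nth_geq (andP Hb).1 _.
  have Hc0 : nth 0 c 0 <= a0 by case: (c) (andP Ha).1 => //= z c' /andP [].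
  by have := Hbel 0 Hb0; rewrite addn0; lia.
Qed.

Lemma phi_setA0 m n p : setA 0 m n p -> phi p = p.
Proof.
case: p => [[|a0 c] b]; first by rewrite /setA /= !andbF.
move/setA_cons => [[/andP [Hc _] /andP [Hb _] _] [_ _ /count_true_eq0]].
rewrite /phi /balanced_parts /unbalanced_parts bflags_flags //= size_flags => ->.
by rewrite mask_false cats0 map_nseq mask_true ?size_nseq // (sorted_sort geq_trans).
Qed.

Lemma setB_shift r m n p : setB r (m + 2) n p = setB r.+1 m n p.
Proof. by case: p => a b; rewrite /setB (_ : m + 2 + 2 * r = m + 2 * r.+1) //; lia. Qed.

Theorem mainTheorem5 (r m n : nat) :
  [/\ (forall p, setA r m n p -> setB r m n (phi p)),
      (forall p q, setA r m n p -> setA r m n q -> phi p = phi q -> p = q)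
    & (forall q, setB r m n q -> exists2 p, setA r m n p & phi p = q)].
Proof.
elim: r m => [|r IH] m.
- split=> [p Hp|p q Hp Hq|q Hq].
  + by rewrite (phi_setA0 Hp); apply/setA0_setB.
  + by rewrite (phi_setA0 Hp) (phi_setA0 Hq).
  + by move/setA0_setB: Hq => Hq; exists q; rewrite ?(phi_setA0 Hq).
- have [IH_into IH_inj IH_onto] := IH (m + 2).
  split=> [p Hp|p q Hp Hq Hpq|q Hq].
  + have [Habs <- _] := absorb_setA Hp.
    by rewrite -setB_shift; apply: IH_into.
  + have [Hp' Ep Rp] := absorb_setA Hp; have [Hq' Eq Rq] := absorb_setA Hq.
    by rewrite -Rp -Rq (IH_inj _ _ Hp' Hq') // Ep Eq.
  + rewrite -setB_shift in Hq; have [p Hp <-] := IH_onto q Hq.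
    by have [Hrel Ephi] := release_setA Hp; exists (release p).
Qed.
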